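(* Let $(T_0,\widetilde T_0)$ be a joint pair of closed abstract Friedrichs operators on a complex Hilbert space $\mathcal{H}$, with $T_1:=\widetilde T_0^*$, $\widetilde T_1:=T_0^*$, $\mathcal{W}_0:=\operatorname{dom}T_0=\operatorname{dom}\widetilde T_0$ and $\mathcal{W}:=\operatorname{dom}T_1=\operatorname{dom}\widetilde T_1$, the latter equipped with the graph norm $\|u\|_{T_1}=(\|u\|^2+\|T_1u\|^2)^{1/2}$. Then the sum $\mathcal{W}_0+\operatorname{ker}T_1+\operatorname{ker}\widetilde T_1$ is direct and is a closed subspace of $\mathcal{W}$. In particular, $\mathcal{W}_0\dotplus\operatorname{ker}T_1$ and $\mathcal{W}_0\dotplus\operatorname{ker}\widetilde T_1$ are both closed in $\mathcal{W}$.
   Context: $\mathcal{H}$ is a complex Hilbert space with inner product $\langle\cdot,\cdot\rangle$ and norm $\|\cdot\|$. A pair $(T,\widetilde T)$ of densely defined linear operators on $\mathcal{H}$ is a joint pair of abstract Friedrichs operators if: (T1) $T$ and $\widetilde T$ have a common dense domain $\mathcal{D}$ and $\langle T\varphi,\psi\rangle=\langle\varphi,\widetilde T\psi\rangle$ for all $\varphi,\psi\in\mathcal{D}$; (T2) there is $c>0$ with $\|(T+\widetilde T)\varphi\|\le c\|\varphi\|$ for all $\varphi\in\mathcal{D}$; (T3) there is $\mu_0>0$ with $\langle (T+\widetilde T)\varphi,\varphi\rangle\ge 2\mu_0\|\varphi\|^2$ for all $\varphi\in\mathcal{D}$. A joint pair of closed abstract Friedrichs operators is such a pair $(T_0,\widetilde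 T_0)$ in which both operators are closed. One has $T_0\subseteq T_1$, $\widetilde T_0\subseteq\widetilde T_1$ and $\operatorname{dom}T_1=\operatorname{dom}\widetilde T_1$; the graph norms of $T_1$ and $\widetilde T_1$ on $\mathcal{W}$ are equivalent. *)

From HB Require Import structures.
From mathcomp Require Import all_boot all_order all_algebra.
From mathcomp Require Import complex.
From mathcomp Require Import all_classical reals.
Set Implicit Arguments. Unset Strict Implicit. Unset Printing Implicit Defensive.
Import Order.TTheory GRing.Theory Num.Theory.
Local Open Scope ring_scope.
Local Open Scope classical_set_scope.

Section Hilbert.
Variable R : realType.
Local Notation C := (R[i]).
Variable H : lmodType C.
Variable ip : H -> H -> C.

Definition hnorm (x : H) : R := Num.sqrt (complex.Re (ip x x)).

Definition is_hilbert : Prop :=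
  [/\ (forall x y, ip x y = Num.conj (ip y x)),
      (forall (a : C) x y z, ip (a *: x + y) z = a * ip x z + ip y z),
      (forall x, 0 <= ip x x),
      (forall x, ip x x = 0 -> x = 0) &
      (forall s : nat -> H,
         (forall e : R, 0 < e -> exists N, forall m n, (N <= m)%N -> (N <= n)%N ->
              hnorm (s m - s n) < e) ->
         exists x, forall e : R, 0 < e -> exists N, forall n, (N <= n)%N ->
              hnorm (s n - x) < e)].

Record operator := Op { dom : set H; app : H -> H }.

Definition is_subspace (S : set H) : Prop :=
  S 0 /\ forall (a : C) x y, S x -> S y -> S (a *: x + y).

Definition linear_op (T : operator) : Prop :=
  is_subspace (dom T) /\
  forall (a : C) x y, dom T x -> dom T y -> app T (a *: x + y) = a *: app T x + app T y.

Definition dense (S : set H) : Prop :=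
  forall x (e : R), 0 < e -> exists y, S y /\ hnorm (x - y) < e.

Definition densely_defined (T : operator) : Prop := linear_op T /\ dense (dom T).

Definition closed_op (T : operator) : Prop :=
  forall x y, (forall e : R, 0 < e -> exists u, dom T u /\ hnorm (u - x) < e /\
                                       hnorm (app T u - y) < e) ->
              dom T x /\ app T x = y.

Definition is_adjoint (A B : operator) : Prop :=
  (forall v, dom B v <-> exists w, forall u, dom A u -> ip (app A u) v = ip u w) /\
  (forall v, dom B v -> forall u, dom A u -> ip (app A u) v = ip u (app B v)).

Definition joint_friedrichs (T Tt : operator) : Prop :=
  [/\ densely_defined T /\ densely_defined Tt, dom T = dom Tt,
      (forall phi psi, dom T phi -> dom T psi -> ip (app T phi) psi = ip phi (app Tt psi)),
      (exists c : R, 0 < c /\ forall phi, dom T phi ->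
           hnorm (app T phi + app Tt phi) <= c * hnorm phi) &
      (exists mu0 : R, 0 < mu0 /\ forall phi, dom T phi ->
           (real_complex R (2 * mu0 * hnorm phi ^+ 2) <= ip (app T phi + app Tt phi) phi))].

Definition joint_closed_friedrichs (T0 Tt0 : operator) : Prop :=
  joint_friedrichs T0 Tt0 /\ closed_op T0 /\ closed_op Tt0.

Definition kernel (T : operator) : set H := [set u | dom T u /\ app T u = 0].

Definition graph_norm (T : operator) (u : H) : R :=
  Num.sqrt (hnorm u ^+ 2 + hnorm (app T u) ^+ 2).

Definition closed_in_graph (T : operator) (S : set H) : Prop :=
  S `<=` dom T /\
  forall u, dom T u ->
    (forall e : R, 0 < e -> exists s, S s /\ graph_norm T (u - s) < e) -> S u.

Definition sum2 (A B : set H) : set H := [set a + b | a in A & b in B].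
Definition sum3 (A B D : set H) : set H :=
  [set x | exists a b d, [/\ A a, B b, D d & x = a + b + d]].

Definition direct2 (A B : set H) : Prop :=
  forall a b, A a -> B b -> a + b = 0 -> a = 0 /\ b = 0.
Definition direct3 (A B D : set H) : Prop :=
  forall a b d, A a -> B b -> D d -> a + b + d = 0 -> [/\ a = 0, b = 0 & d = 0].
End Hilbert.

(* Because T0 + Tt0 is bounded on the dense set W0, the adjoint relations give
   dom T1 = dom Tt1, and on this common domain T1 + Tt1 is the closure of T0 + Tt0,
   hence still bounded by c and coercive with constant 2 mu0.  For x = u + v + w with
   u in W0, v in ker T1 and w in ker Tt1, pairing T1 x with w and Tt1 x with v kills
   the other summands, so coercivity gives 2 mu0 |w| <= |T1 x| and
   2 mu0 |v| <= |Tt1 x| <= (c + 1) |x|_T1.  Hence u, v, w and T0 u are bounded by a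
   multiple of the graph norm of x.  This makes the sum direct, and the components of
   a graph-norm Cauchy sequence in the sum converge, to limits lying in W0 (T0 is
   closed) and in the kernels (kernels of adjoints are closed).  The same bound shows
   that a graph limit of elements of W0 + ker T1 has no ker Tt1 component, and
   symmetrically. *)

From HB Require Import structures.
From mathcomp Require Import all_boot all_order all_algebra.
From mathcomp Require Import complex.
From mathcomp Require Import all_classical reals.
From mathcomp Require Import ring lra.
Import Order.TTheory GRing.Theory Num.Theory.
Local Open Scope ring_scope.
Local Open Scope classical_set_scope.
Set Implicit Arguments. Unset Strict Implicit. Unset Printing Implicit Defensive.

Lemma add3ACA (V : zmodType) (a b c a' b' c' : V) :
  (a + b + c) + (a' + b' + c') = (a + a') + (b + b') + (c + c').
Proof. by rewrite addrACA; congr (_ + _); rewrite addrACA. Qed.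

Lemma sub_add3 (V : zmodType) (a b c a' b' c' : V) :
  (a + b + c) - (a' + b' + c') = (a - a') + (b - b') + (c - c').
Proof. by rewrite !opprD add3ACA. Qed.

Section RealFacts.
Variable R : realType.
Local Notation Re := (@complex.Re R).

Lemma ler_eps_scaled (a b K : R) : 0 <= K ->
  (forall e, 0 < e -> e <= 1 -> a <= b + e * K) -> a <= b.
Proof.
move=> K0 h; rewrite leNgt; apply/negP => ba.
have den0 : 0 < K + (a - b) + 1 by lra.
set e := (a - b) / (K + (a - b) + 1).
have e0 : 0 < e by rewrite divr_gt0 // subr_gt0.
have e1 : e <= 1 by rewrite ler_pdivrMr // mul1r; lra.
have : e * K < a - b.
  rewrite /e mulrAC ltr_pdivrMr //.
  have : 0 <= (a - b) * K by rewrite mulr_ge0 // subr_ge0 ltW.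
  nra.
have := h e e0 e1; lra.
Qed.

(* Only applied to nonnegative sequences, for which it means convergence to 0. *)
Definition null_seq (r : nat -> R) :=
  forall e, 0 < e -> exists N, forall n, (N <= n)%N -> r n < e.

Lemma null_seq_inv_succ : null_seq (fun n => n.+1%:R^-1).
Proof.
move=> e e0; have ei : 0 <= e^-1 by rewrite invr_ge0 ltW.
exists (Num.Def.archi_bound e^-1) => n le_Nn.
rewrite -[e in _ < e]invrK ltf_pV2 ?posrE ?invr_gt0 ?ltr0Sn //.
rewrite -(ler_nat R) in le_Nn; have := archi_boundP ei.
rewrite -natr1; lra.
Qed.

Lemma null_seq_le (r s : nat -> R) :
  (forall n, r n <= s n) -> null_seq s -> null_seq r.
Proof.
move=> rs hs e e0; have [N hN] := hs e e0.
by exists N => n /hN; apply: le_lt_trans.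
Qed.

Lemma null_seqD (r s : nat -> R) :
  null_seq r -> null_seq s -> null_seq (fun n => r n + s n).
Proof.
move=> hr hs e e0; have e2 : 0 < e / 2 by rewrite divr_gt0.
have [N1 hN1] := hr _ e2; have [N2 hN2] := hs _ e2.
exists (maxn N1 N2) => n; rewrite geq_max => /andP[/hN1 ? /hN2 ?]; lra.
Qed.

Lemma complex_eq0 (z : R[i]) : Re z = 0 -> Re ('i%C * z) = 0 -> z = 0.
Proof. by case: z => a b /= -> /eqP; rewrite !(mul0r, mul1r) sub0r oppr_eq0 => /eqP ->. Qed.

Lemma ReD (z w : R[i]) : Re (z + w) = Re z + Re w.
Proof. by case: z; case: w. Qed.

Lemma ReN (z : R[i]) : Re (- z) = - Re z.
Proof. by case: z. Qed.

Lemma ReJ (z : R[i]) : Re (Num.conj z) = Re z.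
Proof. by case: z. Qed.

Lemma Re_realM (k : R) (z : R[i]) : Re (real_complex R k * z) = k * Re z.
Proof. by case: z => a b /=; rewrite mul0r subr0. Qed.

Lemma conj_real (k : R) : Num.conj (real_complex R k) = real_complex R k.
Proof. exact: conjc_real. Qed.

End RealFacts.

Section LinearOperator.
Variables (R : realType) (H : lmodType R[i]) (T : operator H).
Hypothesis linT : linear_op T.

Lemma dom0 : dom T 0.
Proof. by case: linT => [[]]. Qed.

Lemma dom_lin a x y : dom T x -> dom T y -> dom T (a *: x + y).
Proof. by case: linT => [[_ closed_lin] _]; exact: closed_lin. Qed.

Lemma app_lin a x y : dom T x -> dom T y -> app T (a *: x + y) = a *: app T x + app T y.
Proof. by case: linT => _ app_lin; exact: app_lin. Qed.

Lemma domD x y : dom T x -> dom T y -> dom T (x + y).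
Proof. by move=> dx dy; rewrite -[x]scale1r; apply: dom_lin. Qed.

Lemma appD x y : dom T x -> dom T y -> app T (x + y) = app T x + app T y.
Proof. by move=> dx dy; rewrite -[x]scale1r app_lin // !scale1r. Qed.

Lemma domB x y : dom T x -> dom T y -> dom T (x - y).
Proof. by move=> dx dy; rewrite addrC -scaleN1r; apply: dom_lin. Qed.

Lemma appB x y : dom T x -> dom T y -> app T (x - y) = app T x - app T y.
Proof. by move=> dx dy; rewrite addrC -scaleN1r app_lin // scaleN1r addrC. Qed.

Lemma app0 : app T 0 = 0.
Proof. by have := appB dom0 dom0; rewrite !subrr. Qed.

Lemma kernel0 : kernel T 0.
Proof. by split; [exact: dom0 | exact: app0]. Qed.

Lemma kernel_lin a x y : kernel T x -> kernel T y -> kernel T (a *: x + y).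
Proof.
by move=> [dx Tx] [dy Ty]; split; [exact: dom_lin | rewrite app_lin // Tx Ty scaler0 addr0].
Qed.

Lemma kernelB x y : kernel T x -> kernel T y -> kernel T (x - y).
Proof. by move=> [dx Tx] [dy Ty]; split; [exact: domB | rewrite appB // Tx Ty subrr]. Qed.

End LinearOperator.

Section InnerProduct.
Variable R : realType.
Local Notation Re := (@complex.Re R).
Variable H : lmodType R[i].
Variable ip : H -> H -> R[i].
Hypothesis hH : is_hilbert ip.
Local Notation hn := (hnorm ip).

Lemma ipC x y : ip x y = Num.conj (ip y x).
Proof. by case: hH. Qed.

Lemma ipDl x y z : ip (x + y) z = ip x z + ip y z.
Proof. by case: hH => _ ipL _ _ _; rewrite -[x]scale1r ipL mul1r scale1r. Qed.

Lemma ip0l z : ip 0 z = 0.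
Proof. by apply: (addrI (ip 0 z)); rewrite addr0 -ipDl addr0. Qed.

Lemma ipZl a x z : ip (a *: x) z = a * ip x z.
Proof. by case: hH => _ ipL _ _ _; rewrite -[a *: x]addr0 ipL ip0l addr0. Qed.

Lemma ipNl x z : ip (- x) z = - ip x z.
Proof. by rewrite -scaleN1r ipZl mulN1r. Qed.

Lemma ipBl x y z : ip (x - y) z = ip x z - ip y z.
Proof. by rewrite ipDl ipNl. Qed.

Lemma ipDr x y z : ip z (x + y) = ip z x + ip z y.
Proof. by rewrite ipC ipDl rmorphD (ipC z x) (ipC z y). Qed.

Lemma ip0r z : ip z 0 = 0.
Proof. by rewrite ipC ip0l rmorph0. Qed.

Lemma ipZr a x z : ip z (a *: x) = Num.conj a * ip z x.
Proof. by rewrite ipC ipZl rmorphM (ipC z x). Qed.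

Lemma ipNr x z : ip z (- x) = - ip z x.
Proof. by rewrite ipC ipNl rmorphN (ipC z x). Qed.

Lemma ipBr x y z : ip z (x - y) = ip z x - ip z y.
Proof. by rewrite ipDr ipNr. Qed.

Lemma Re_ipC x y : Re (ip x y) = Re (ip y x).
Proof. by rewrite ipC ReJ. Qed.

Lemma Re_ipxx_ge0 x : 0 <= Re (ip x x).
Proof. by case: hH => _ _ ip_ge0 _ _; move: (ip_ge0 x); rewrite lecE => /andP[]. Qed.

Lemma hnorm_ge0 x : 0 <= hn x.
Proof. exact: sqrtr_ge0. Qed.

Lemma hnorm_sqr x : hn x ^+ 2 = Re (ip x x).
Proof. by rewrite sqr_sqrtr // Re_ipxx_ge0. Qed.

Lemma hnorm0 : hn 0 = 0.
Proof. by rewrite /hnorm ip0l sqrtr0. Qed.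

Lemma hnormN x : hn (- x) = hn x.
Proof. by rewrite /hnorm ipNl ipNr opprK. Qed.

Lemma hnormB x y : hn (x - y) = hn (y - x).
Proof. by rewrite -hnormN opprB. Qed.

Lemma hnorm_le0 x : hn x <= 0 -> x = 0.
Proof.
move=> le_x0; case: hH => _ _ ip_ge0 ip_eq0 _; apply: ip_eq0.
have Re0 : Re (ip x x) = 0.
  by rewrite -hnorm_sqr; apply/eqP; rewrite sqrf_eq0 eq_le le_x0 hnorm_ge0.
by case: (ip x x) Re0 (ger0_Im (ip_ge0 x)) => a b /= -> ->.
Qed.

Lemma Re_ip_le x y : Re (ip x y) <= hn x * hn y.
Proof.
have [xy0|xy0] := eqVneq (hn x * hn y) 0.
  rewrite xy0; move/eqP: xy0; rewrite mulf_eq0 => /orP[] /eqP h0.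
    have -> : x = 0 by apply: hnorm_le0; rewrite h0.
    by rewrite ip0l.
  have -> : y = 0 by apply: hnorm_le0; rewrite h0.
  by rewrite ip0r.
have xy_gt0 : 0 < hn x * hn y by rewrite lt_def xy0 mulr_ge0 // hnorm_ge0.
have := Re_ipxx_ge0 (real_complex R (hn y) *: x - real_complex R (hn x) *: y).
rewrite ipBl !ipBr !ipZl !ipZr !conj_real !(ReD, ReN, Re_realM) -!hnorm_sqr (Re_ipC y x).
nra.
Qed.

Lemma cauchy_schwarz x y : `|Re (ip x y)| <= hn x * hn y.
Proof. by rewrite ler_norml Re_ip_le andbT lerNl -ReN -ipNr -(hnormN y) Re_ip_le. Qed.

Lemma hnormD_le x y : hn (x + y) <= hn x + hn y.
Proof.
rewrite -(ler_pXn2r (n := 2)) ?nnegrE ?addr_ge0 ?hnorm_ge0 //.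
rewrite hnorm_sqr ipDl !ipDr !ReD (Re_ipC y x) sqrrD -!hnorm_sqr.
have := Re_ip_le x y; lra.
Qed.

Lemma ler_hnorm_sub x y : hn x <= hn y + hn (x - y).
Proof. by rewrite -{1}(subrKC y x) hnormD_le. Qed.

Lemma hnormB_le x y z : hn (x - z) <= hn (x - y) + hn (y - z).
Proof. by rewrite -(subrK y x) -addrA addrK hnormD_le. Qed.

Lemma Re_ip_small_eq0 z p q :
  (forall e, 0 < e -> exists w1 w2, [/\ hn w1 < e, hn w2 < e & z = ip p w1 + ip q w2]) ->
  Re z = 0.
Proof.
move=> small; apply/eqP; rewrite -normr_le0.
apply: (@ler_eps_scaled _ _ _ (hn p + hn q)); first by rewrite addr_ge0 ?hnorm_ge0.
move=> e e0 _; have [w1 [w2 [w1e w2e ->]]] := small e e0.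
rewrite add0r ReD (le_trans (ler_normD _ _)) // mulrDr.
apply: lerD; apply: (le_trans (cauchy_schwarz _ _));
  by rewrite mulrC ler_wpM2r ?hnorm_ge0 // ltW.
Qed.

Lemma ip_small_eq0 z p q :
  (forall e, 0 < e -> exists w1 w2, [/\ hn w1 < e, hn w2 < e & z = ip p w1 + ip q w2]) ->
  z = 0.
Proof.
move=> small; apply: complex_eq0; first exact: Re_ip_small_eq0 small.
apply: (@Re_ip_small_eq0 _ ('i%C *: p) ('i%C *: q)) => e /small [w1 [w2 [w1e w2e ->]]].
by exists w1, w2; rewrite mulrDr !ipZl.
Qed.

Definition cvg_to (a : nat -> H) (A : H) := null_seq (fun n => hn (a n - A)).

Lemma cvg_toD a b A B : cvg_to a A -> cvg_to b B -> cvg_to (fun n => a n + b n) (A + B).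
Proof.
move=> aA bB; apply: null_seq_le (null_seqD aA bB) => n.
by rewrite opprD addrACA hnormD_le.
Qed.

Lemma cvg_to_unique a A B : cvg_to a A -> cvg_to a B -> A = B.
Proof.
move=> aA aB; apply/eqP; rewrite -subr_eq0; apply/eqP/hnorm_le0.
apply: (@ler_eps_scaled _ _ _ 1) => // e e0 _.
have [N hN] := null_seqD aA aB e0.
rewrite add0r mulr1 (le_trans (hnormB_le _ (a N) _)) // hnormB; exact/ltW/hN.
Qed.

Lemma cauchy_cvg_to (a : nat -> H) (r : nat -> R) (K : R) : 0 <= K -> null_seq r ->
  (forall m n, hn (a m - a n) <= K * (r m + r n)) -> exists A, cvg_to a A.
Proof.
move=> K0 r0 ar; case: hH => _ _ _ _ complete; apply: complete => e e0.
have K1 : 0 < 2 * K + 1 by lra.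
have [N hN] := r0 _ (divr_gt0 e0 K1).
exists N => m n /hN rm /hN rn; apply: le_lt_trans (ar m n) _.
move: rm rn; rewrite !ltr_pdivlMr // => rm rn; nra.
Qed.

Lemma cvg_to_cst x : cvg_to (fun=> x) x.
Proof. by move=> e e0; exists 0%N => n _; rewrite subrr hnorm0. Qed.

Lemma ip_cvg_to_eq a b A B p q : cvg_to a A -> cvg_to b B ->
  (forall n, ip p (a n) = ip q (b n)) -> ip p A = ip q B.
Proof.
move=> aA bB ab; apply/eqP; rewrite -subr_eq0; apply/eqP.
apply: (@ip_small_eq0 _ p q) => e e0.
have [N /(_ N (leqnn N)) hN] := null_seqD aA bB e0.
have [d1_ge0 d2_ge0] := (hnorm_ge0 (a N - A), hnorm_ge0 (b N - B)).
exists (A - a N), (b N - B); split; last by rewrite !ipBr ab addrA subrK.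
  by rewrite hnormB; lra.
lra.
Qed.

Lemma cvg_to_hnorm_le a b A B k : 0 <= k -> cvg_to a A -> cvg_to b B ->
  (forall n, hn (a n) <= k * hn (b n)) -> hn A <= k * hn B.
Proof.
move=> k0 aA bB ab; apply: (@ler_eps_scaled _ _ _ (1 + k)) => [|e e0 _]; first lra.
have [N /(_ N (leqnn N)) hN] := null_seqD aA bB e0.
have [d1_ge0 d2_ge0] := (hnorm_ge0 (a N - A), hnorm_ge0 (b N - B)).
have := ler_hnorm_sub A (a N); rewrite hnormB.
have : k * hn (b N) <= k * (hn B + hn (b N - B)).
  by rewrite ler_wpM2l // ler_hnorm_sub.
have : k * hn (b N - B) <= k * e by rewrite ler_wpM2l //; lra.
have := ab N; lra.
Qed.

Lemma cvg_to_Re_ip_ge a b A B k : 0 <= k -> cvg_to a A -> cvg_to b B ->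
  (forall n, k * hn (b n) ^+ 2 <= Re (ip (a n) (b n))) -> k * hn B ^+ 2 <= Re (ip A B).
Proof.
move=> k0 aA bB ab.
apply: (@ler_eps_scaled _ _ _ (hn A + hn B + 1 + k * (2 * hn B + 3))) => [|e e0 e1].
  by have := hnorm_ge0 A; have := hnorm_ge0 B; nra.
have [N /(_ N (leqnn N)) hN] := null_seqD aA bB e0.
have [d1_ge0 d2_ge0] := (hnorm_ge0 (a N - A), hnorm_ge0 (b N - B)).
have split_ip : Re (ip (a N) (b N)) =
    Re (ip A B) + Re (ip (a N - A) (b N)) + Re (ip A (b N - B)).
  by rewrite -!ReD ipBl ipBr; congr Re; ring.
have hbN : hn (b N) <= hn B + hn (b N - B) := ler_hnorm_sub (b N) B.
have le1 : Re (ip (a N - A) (b N)) <= e * (hn B + 1).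
  by apply: (le_trans (Re_ip_le _ _)); apply: ler_pM; rewrite ?hnorm_ge0 //; lra.
have le2 : Re (ip A (b N - B)) <= hn A * e.
  by apply: (le_trans (Re_ip_le _ _)); rewrite ler_wpM2l ?hnorm_ge0 //; lra.
have le3 : k * hn B ^+ 2 <= k * hn (b N) ^+ 2 + k * (e * (2 * hn B + 3)).
  rewrite -mulrDr ler_wpM2l //.
  have := ler_hnorm_sub B (b N); rewrite hnormB => hB.
  have := hnorm_ge0 B; have := hnorm_ge0 (b N).
  nra.
have := ab N; lra.
Qed.

Lemma dense_cvg_to S x : dense ip S -> exists f, (forall n, S (f n)) /\ cvg_to f x.
Proof.
move=> dS; have pos (n : nat) : 0 < n.+1%:R^-1 :> R by rewrite invr_gt0 ltr0Sn.
have [f hf] := choice (fun n => dS x _ (pos n)).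
exists f; split => [n|]; first by case: (hf n).
apply: (null_seq_le _ (@null_seq_inv_succ R)) => n.
by rewrite hnormB; case: (hf n) => _ /ltW.
Qed.

Lemma dense_orthogonal_eq0 S z : dense ip S -> (forall p, S p -> ip p z = 0) -> z = 0.
Proof.
move=> dS orth; have [f [Sf fz]] := dense_cvg_to z dS.
case: hH => _ _ _ ip_eq0 _; apply: ip_eq0; rewrite -(ip0r z).
apply: ip_cvg_to_eq fz (cvg_to_cst 0) _ => n.
by rewrite ipC orth // ip0r rmorph0.
Qed.

Lemma coercive_hnorm_le k y w : k * hn w ^+ 2 <= Re (ip y w) -> k * hn w <= hn y.
Proof.
move=> coer; have [w0|w0] := eqVneq (hn w) 0; first by rewrite w0 mulr0 hnorm_ge0.
have w_gt0 : 0 < hn w by rewrite lt_def w0 hnorm_ge0.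
rewrite -(ler_pM2r w_gt0) -mulrA -expr2 (le_trans coer) //.
by rewrite Re_ipC mulrC Re_ip_le.
Qed.

Lemma closed_op_cvg_to (T : operator H) u x y : closed_op ip T -> (forall n, dom T (u n)) ->
  cvg_to u x -> cvg_to (fun n => app T (u n)) y -> dom T x /\ app T x = y.
Proof.
move=> clT du ux uy; apply: clT => e e0.
have [N /(_ N (leqnn N)) hN] := null_seqD ux uy e0.
have [d1_ge0 d2_ge0] := (hnorm_ge0 (u N - x), hnorm_ge0 (app T (u N) - y)).
by exists (u N); split; [exact: du | split; lra].
Qed.

Section GraphNorm.
Variable T : operator H.
Local Notation gn := (graph_norm ip T).

Lemma graph_norm_ge x : hn x <= gn x /\ hn (app T x) <= gn x.
Proof.
split; rewrite -[X in X <= _]ger0_norm ?hnorm_ge0 // -sqrtr_sqr ler_wsqrtr //.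
  by rewrite lerDl sqr_ge0.
by rewrite lerDr sqr_ge0.
Qed.

Lemma graph_norm_le x : gn x <= hn x + hn (app T x).
Proof.
rewrite -[X in _ <= X]ger0_norm ?addr_ge0 ?hnorm_ge0 // -sqrtr_sqr ler_wsqrtr //.
by have := hnorm_ge0 x; have := hnorm_ge0 (app T x); nra.
Qed.

Hypothesis linT : linear_op T.

Lemma graph_norm0 : gn 0 = 0.
Proof. by rewrite /graph_norm app0 // hnorm0 expr0n add0r sqrtr0. Qed.

Lemma graph_norm_sub_le x y z : dom T x -> dom T y -> dom T z ->
  gn (y - z) <= 2 * (gn (x - y) + gn (x - z)).
Proof.
move=> dx dy dz; apply: le_trans (graph_norm_le _) _.
have := hnormB_le y x z; rewrite (hnormB y x).
have := hnormB_le (app T y) (app T x) (app T z).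
rewrite (hnormB (app T y) (app T x)) -!appB //.
have [] := graph_norm_ge (x - y); have [] := graph_norm_ge (x - z).
lra.
Qed.

End GraphNorm.

Section Adjoint.
Variables A B : operator H.
Hypothesis hAB : is_adjoint ip A B.
Hypothesis denseA : dense ip (dom A).

Lemma adjointP v w : (forall u, dom A u -> ip (app A u) v = ip u w) -> dom B v /\ app B v = w.
Proof.
move=> vw; have dv : dom B v by apply/hAB.1; exists w.
split => //; apply/eqP; rewrite -subr_eq0; apply/eqP.
apply: (dense_orthogonal_eq0 denseA) => u du.
by rewrite ipBr -hAB.2 // vw // subrr.
Qed.

Lemma adjoint_linear : linear_op B.
Proof.
have [dB0 _] : dom B 0 /\ app B 0 = 0 by apply: adjointP => u _; rewrite !ip0r.
have lin a x y : dom B x -> dom B y ->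
    dom B (a *: x + y) /\ app B (a *: x + y) = a *: app B x + app B y.
  move=> dx dy; apply: adjointP => u du.
  by rewrite !ipDr !ipZr !hAB.2.
split; first split => //.
  by move=> a x y dx dy; case: (lin a x y dx dy).
by move=> a x y dx dy; case: (lin a x y dx dy).
Qed.

Lemma adjoint_kernel_cvg_to v V : (forall n, kernel B (v n)) -> cvg_to v V -> kernel B V.
Proof.
move=> kv vV; apply: adjointP => u du.
apply: (ip_cvg_to_eq vV (cvg_to_cst 0)) => n.
by case: (kv n) => dv Bv; rewrite hAB.2 // Bv.
Qed.

End Adjoint.

Section JointFriedrichs.
Variables T0 Tt0 T1 Tt1 : operator H.
Local Notation D := (dom T0).
Local Notation B0 p := (app T0 p + app Tt0 p).
Local Notation B1 x := (app T1 x + app Tt1 x).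
Local Notation gn := (graph_norm ip T1).

Hypothesis dom_T0_Tt0 : D = dom Tt0.
Hypothesis linT0 : linear_op T0.
Hypothesis linTt0 : linear_op Tt0.
Hypothesis denseT0 : dense ip D.
Hypothesis T0_Tt0_adj : forall p q, D p -> D q -> ip (app T0 p) q = ip p (app Tt0 q).
Variables c mu0 : R.
Hypothesis c_ge0 : 0 <= c.
Hypothesis mu0_gt0 : 0 < mu0.
Hypothesis B0_bounded : forall p, D p -> hn (B0 p) <= c * hn p.
Hypothesis B0_coercive : forall p, D p -> real_complex R (2 * mu0 * hn p ^+ 2) <= ip (B0 p) p.
Hypothesis closedT0 : closed_op ip T0.
Hypothesis adjT1 : is_adjoint ip Tt0 T1.
Hypothesis adjTt1 : is_adjoint ip T0 Tt1.

Lemma denseTt0 : dense ip (dom Tt0).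
Proof. by rewrite -dom_T0_Tt0. Qed.

Lemma linT1 : linear_op T1.
Proof. exact: (adjoint_linear adjT1 denseTt0). Qed.

Lemma linTt1 : linear_op Tt1.
Proof. exact: (adjoint_linear adjTt1 denseT0). Qed.

Lemma T1_extends p : D p -> dom T1 p /\ app T1 p = app T0 p.
Proof.
move=> Dp; apply: (adjointP adjT1 denseTt0) => q; rewrite -dom_T0_Tt0 => Dq.
by rewrite (ipC (app Tt0 q)) -T0_Tt0_adj // -ipC.
Qed.

Lemma Tt1_extends p : D p -> dom Tt1 p /\ app Tt1 p = app Tt0 p.
Proof. by move=> Dp; apply: (adjointP adjTt1 denseT0) => q Dq; rewrite T0_Tt0_adj. Qed.

Lemma B0_sym p q : D p -> D q -> ip (B0 p) q = ip p (B0 q).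
Proof.
move=> Dp Dq; rewrite ipDl ipDr T0_Tt0_adj // addrC; congr (_ + _).
by rewrite (ipC (app Tt0 p)) -T0_Tt0_adj // -ipC.
Qed.

Lemma B0B p q : D p -> D q -> B0 (p - q) = B0 p - B0 q.
Proof.
move=> Dp Dq; have [Dp' Dq'] : dom Tt0 p /\ dom Tt0 q by rewrite -dom_T0_Tt0.
by rewrite (appB linT0) // (appB linTt0) // opprD addrACA.
Qed.

Lemma B0_closable v : exists f z, [/\ forall n, D (f n), cvg_to f v,
  cvg_to (fun n => B0 (f n)) z & forall p, D p -> ip (B0 p) v = ip p z].
Proof.
have [f [Df fv]] := dense_cvg_to v denseT0.
have [z fz] : exists z, cvg_to (fun n => B0 (f n)) z.
  apply: (@cauchy_cvg_to _ (fun n => hn (f n - v)) c) => // m n.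
  rewrite -B0B // (le_trans (B0_bounded (domB linT0 (Df m) (Df n)))) //.
  by rewrite ler_wpM2l // (le_trans (hnormB_le _ v _)) // (hnormB v).
exists f, z; split => // p Dp.
by apply: (ip_cvg_to_eq fv fz) => n; apply: B0_sym.
Qed.

Lemma dom_T1_sub v : dom T1 v -> dom Tt1 v.
Proof.
move=> dv; have [f [z [_ _ _ Bz]]] := B0_closable v.
suff [] : dom Tt1 v /\ app Tt1 v = z - app T1 v by [].
apply: (adjointP adjTt1 denseT0) => u Du.
have Du' : dom Tt0 u by rewrite -dom_T0_Tt0.
by rewrite ipBr -Bz // -adjT1.2 // ipDl addrK.
Qed.

Lemma dom_Tt1_sub v : dom Tt1 v -> dom T1 v.
Proof.
move=> dv; have [f [z [_ _ _ Bz]]] := B0_closable v.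
suff [] : dom T1 v /\ app T1 v = z - app Tt1 v by [].
apply: (adjointP adjT1 denseTt0) => u; rewrite -dom_T0_Tt0 => Du.
by rewrite ipBr -Bz // -adjTt1.2 // ipDl addrC addKr.
Qed.

Lemma B1_ip x p : dom T1 x -> D p -> ip p (B1 x) = ip (B0 p) x.
Proof.
move=> dx Dp; have dx' := dom_T1_sub dx.
have Dp' : dom Tt0 p by rewrite -dom_T0_Tt0.
by rewrite ipDr -adjT1.2 // -adjTt1.2 // ipDl addrC.
Qed.

Lemma B1_closure x : dom T1 x ->
  exists f, [/\ forall n, D (f n), cvg_to f x & cvg_to (fun n => B0 (f n)) (B1 x)].
Proof.
move=> dx; have [f [z [Df fx fz Bz]]] := B0_closable x.
exists f; suff -> : B1 x = z by [].
apply/eqP; rewrite -subr_eq0; apply/eqP; apply: (dense_orthogonal_eq0 denseT0) => p Dp.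
by rewrite ipBr B1_ip // Bz // subrr.
Qed.

Lemma B1_bounded x : dom T1 x -> hn (B1 x) <= c * hn x.
Proof.
case/B1_closure => f [Df fx fB].
exact: (cvg_to_hnorm_le c_ge0 fB fx (fun n => B0_bounded (Df n))).
Qed.

Lemma B1_coercive x : dom T1 x -> 2 * mu0 * hn x ^+ 2 <= Re (ip (B1 x) x).
Proof.
case/B1_closure => f [Df fx fB]; apply: (cvg_to_Re_ip_ge _ fB fx) => [|n].
  by rewrite mulr_ge0 // ltW.
by have := B0_coercive (Df n); rewrite lecE => /andP[].
Qed.

Lemma T1_sum3 u v w : D u -> kernel T1 v -> kernel Tt1 w ->
  dom T1 (u + v + w) /\ app T1 (u + v + w) = app T0 u + app T1 w.
Proof.
move=> Du [dv T1v] [/dom_Tt1_sub dw _]; have [du T1u] := T1_extends Du.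
have duv : dom T1 (u + v) := domD linT1 du dv.
by split; [exact: (domD linT1 duv dw) | rewrite !(appD linT1) // T1u T1v addr0].
Qed.

Lemma Tt1_sum3 u v w : D u -> kernel T1 v -> kernel Tt1 w ->
  dom Tt1 (u + v + w) /\ app Tt1 (u + v + w) = app Tt0 u + app Tt1 v.
Proof.
move=> Du [/dom_T1_sub dv _] [dw Tt1w]; have [du Tt1u] := Tt1_extends Du.
have duv : dom Tt1 (u + v) := domD linTt1 du dv.
by split; [exact: (domD linTt1 duv dw) | rewrite !(appD linTt1) // Tt1u Tt1w addr0].
Qed.

Lemma kernel_Tt1_coercive u v w : D u -> kernel T1 v -> kernel Tt1 w ->
  2 * mu0 * hn w <= hn (app T1 (u + v + w)).
Proof.
move=> Du kv [dw Tt1w]; have [_ ->] := T1_sum3 Du kv (conj dw Tt1w).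
apply: coercive_hnorm_le; rewrite ipDl adjTt1.2 // Tt1w ip0r add0r.
by have := B1_coercive (dom_Tt1_sub dw); rewrite Tt1w addr0.
Qed.

Lemma kernel_T1_coercive u v w : D u -> kernel T1 v -> kernel Tt1 w ->
  2 * mu0 * hn v <= hn (app Tt1 (u + v + w)).
Proof.
move=> Du [dv T1v] kw; have [_ ->] := Tt1_sum3 Du (conj dv T1v) kw.
have Du' : dom Tt0 u by rewrite -dom_T0_Tt0.
apply: coercive_hnorm_le; rewrite ipDl adjT1.2 // T1v ip0r add0r.
by have := B1_coercive dv; rewrite T1v add0r.
Qed.

Lemma Tt1_bounded x : dom T1 x -> hn (app Tt1 x) <= c * hn x + hn (app T1 x).
Proof.
move=> dx; rewrite -[app Tt1 x](addKr (app T1 x)) addrC.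
by rewrite (le_trans (hnormD_le _ _)) // hnormN lerD2r B1_bounded.
Qed.

Lemma sum3_sub_dom : sum3 D (kernel T1) (kernel Tt1) `<=` dom T1.
Proof. by move=> _ [u [v [w [Du kv kw ->]]]]; case: (T1_sum3 Du kv kw). Qed.

Lemma sum3_components_bounded : exists K, 0 <= K /\
  forall u v w, D u -> kernel T1 v -> kernel Tt1 w ->
  [/\ hn u <= K * gn (u + v + w), hn v <= K * gn (u + v + w),
      hn w <= K * gn (u + v + w) & hn (app T0 u) <= K * gn (u + v + w)].
Proof.
pose M := (c + 1) / (2 * mu0).
have M_ge0 : 0 <= M.
  by rewrite divr_ge0 ?mulr_ge0 ?addr_ge0 // ltW.
exists (1 + (2 + c) * M); split; first by rewrite addr_ge0 // mulr_ge0 // addr_ge0.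
move=> u v w Du kv kw; set x := u + v + w; set g := gn x.
have [dx T1x] := T1_sum3 Du kv kw; rewrite -/x in dx T1x.
have [x_le T1x_le] := graph_norm_ge T1 x; rewrite -/g in x_le T1x_le.
have g_ge0 : 0 <= g by rewrite (le_trans (hnorm_ge0 x)).
have le_Mg y : 2 * mu0 * y <= (c + 1) * g -> y <= M * g.
  by move=> le_y; rewrite /M mulrAC ler_pdivlMr ?mulr_gt0 // mulrC.
have g_le : g <= (c + 1) * g by rewrite mulrDl mul1r lerDr mulr_ge0.
have hw : hn w <= M * g.
  apply: le_Mg; have := kernel_Tt1_coercive Du kv kw; rewrite -/x; lra.
have hv : hn v <= M * g.
  apply: le_Mg; have := kernel_T1_coercive Du kv kw; rewrite -/x.
  have := Tt1_bounded dx; have : c * hn x <= c * g by rewrite ler_wpM2l.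
  rewrite mulrDl mul1r; lra.
have hu : hn u <= g + 2 * (M * g).
  have -> : u = x - (v + w) by rewrite /x -[u + v + w]addrA addrK.
  rewrite (le_trans (hnormD_le _ _)) // hnormN.
  by have := hnormD_le v w; lra.
have hT0u : hn (app T0 u) <= g + c * (M * g).
  have -> : app T0 u = app T1 x - app T1 w by rewrite T1x addrK.
  rewrite (le_trans (hnormD_le _ _)) // hnormN lerD //.
  case: kw => dw Tt1w; have := B1_bounded (dom_Tt1_sub dw); rewrite Tt1w addr0 => Tw.
  by rewrite (le_trans Tw) // ler_wpM2l.
have cMg : 0 <= c * (M * g) by rewrite mulr_ge0 // mulr_ge0.
split; nra.
Qed.

Lemma sum3_components_lipschitz : exists K, 0 <= K /\
  forall u u' v v' w w', D u -> D u' -> kernel T1 v -> kernel T1 v' ->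
    kernel Tt1 w -> kernel Tt1 w' ->
  let g := gn (u + v + w - (u' + v' + w')) in
  [/\ hn (u - u') <= K * g, hn (v - v') <= K * g, hn (w - w') <= K * g &
      hn (app T0 u - app T0 u') <= K * g].
Proof.
have [K [K_ge0 bound]] := sum3_components_bounded.
exists K; split => // u u' v v' w w' Du Du' kv kv' kw kw'.
rewrite /= sub_add3 -(appB linT0) //.
by apply: bound; [exact: (domB linT0) | exact: (kernelB linT1) | exact: (kernelB linTt1)].
Qed.

Lemma sum3_direct : direct3 D (kernel T1) (kernel Tt1).
Proof.
move=> u v w Du kv kw sum0; have [K [_ bound]] := sum3_components_bounded.
have [] := bound u v w Du kv kw; rewrite sum0 (graph_norm0 linT1) mulr0.
by move=> /hnorm_le0 -> /hnorm_le0 -> /hnorm_le0 ->.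
Qed.

Lemma sum3_subspace : is_subspace (sum3 D (kernel T1) (kernel Tt1)).
Proof.
split; first by exists 0, 0, 0; split; rewrite ?addr0 //;
  [exact: (dom0 linT0) | exact: (kernel0 linT1) | exact: (kernel0 linTt1)].
move=> a _ _ [u [v [w [Du kv kw ->]]]] [u' [v' [w' [Du' kv' kw' ->]]]].
exists (a *: u + u'), (a *: v + v'), (a *: w + w'); split.
- exact: (dom_lin linT0).
- exact: (kernel_lin linT1).
- exact: (kernel_lin linTt1).
by rewrite !scalerDr add3ACA.
Qed.

Lemma sum3_graph_limit x (u v w : nat -> H) : dom T1 x ->
  (forall n, D (u n)) -> (forall n, kernel T1 (v n)) -> (forall n, kernel Tt1 (w n)) ->
  null_seq (fun n => gn (x - (u n + v n + w n))) -> sum3 D (kernel T1) (kernel Tt1) x.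
Proof.
move=> dx Du kv kw xs; pose s n := u n + v n + w n.
have ds n : dom T1 (s n) := (T1_sum3 (Du n) (kv n) (kw n)).1.
have [K [K_ge0 lip]] := sum3_components_lipschitz.
have gap m n : K * gn (s m - s n) <= 2 * K * (gn (x - s m) + gn (x - s n)).
  by rewrite [2 * K]mulrC -mulrA ler_wpM2l // (graph_norm_sub_le linT1).
have K2_ge0 : 0 <= 2 * K by rewrite mulr_ge0.
have cauchy m n : let e := 2 * K * (gn (x - s m) + gn (x - s n)) in
    [/\ hn (u m - u n) <= e, hn (v m - v n) <= e, hn (w m - w n) <= e &
        hn (app T0 (u m) - app T0 (u n)) <= e].
  have [hu hv hw hT0u] := lip _ _ _ _ _ _ (Du m) (Du n) (kv m) (kv n) (kw m) (kw n).
  by split; apply: le_trans (gap m n).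
have [U uU] : exists U, cvg_to u U.
  by apply: (cauchy_cvg_to K2_ge0 xs) => m n; case: (cauchy m n).
have [V vV] : exists V, cvg_to v V.
  by apply: (cauchy_cvg_to K2_ge0 xs) => m n; case: (cauchy m n).
have [W wW] : exists W, cvg_to w W.
  by apply: (cauchy_cvg_to K2_ge0 xs) => m n; case: (cauchy m n).
have [Z uZ] : exists Z, cvg_to (fun n => app T0 (u n)) Z.
  by apply: (cauchy_cvg_to K2_ge0 xs) => m n; case: (cauchy m n).
have [DU _] := closed_op_cvg_to closedT0 Du uU uZ.
have kV := adjoint_kernel_cvg_to adjT1 denseTt0 kv vV.
have kW := adjoint_kernel_cvg_to adjTt1 denseT0 kw wW.
exists U, V, W; split => //; apply: (cvg_to_unique (a := s)).
- apply: null_seq_le xs => n; rewrite hnormB.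
  exact: (graph_norm_ge T1 (x - s n)).1.
- exact: cvg_toD (cvg_toD uU vV) wW.
Qed.

Lemma sum3_closed : closed_in_graph ip T1 (sum3 D (kernel T1) (kernel Tt1)).
Proof.
split=> [|x dx approx]; first exact: sum3_sub_dom.
have pos (n : nat) : 0 < n.+1%:R^-1 :> R by rewrite invr_gt0 ltr0Sn.
have approx_n n : exists t : H * H * H,
    [/\ D t.1.1, kernel T1 t.1.2, kernel Tt1 t.2 &
        gn (x - (t.1.1 + t.1.2 + t.2)) < n.+1%:R^-1].
  by have [_ [[u [v [w [Du kv kw ->]]]] xs]] := approx _ (pos n); exists (u, v, w).
have [t ht] := choice approx_n.
apply: (sum3_graph_limit (u := fun n => (t n).1.1) (v := fun n => (t n).1.2)
  (w := fun n => (t n).2)) => // [n|n|n|]; try by case: (ht n).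
by apply: (null_seq_le _ (@null_seq_inv_succ R)) => n; case: (ht n) => _ _ _ /ltW.
Qed.

Lemma sum2_kernel_T1_closed : closed_in_graph ip T1 (sum2 D (kernel T1)).
Proof.
have sub : sum2 D (kernel T1) `<=` sum3 D (kernel T1) (kernel Tt1).
  move=> _ [u Du [v kv <-]]; exists u, v, 0; rewrite addr0; split => //.
  exact: (kernel0 linTt1).
split=> [x /sub /sum3_sub_dom // | x dx approx].
have [u [v [w [Du kv kw xE]]]] : sum3 D (kernel T1) (kernel Tt1) x.
  by apply: sum3_closed.2 => // e /approx [s [/sub s3 xs]]; exists s.
suff w0 : w = 0 by exists u => //; exists v; rewrite // xE w0 addr0.
have [K [K_ge0 lip]] := sum3_components_lipschitz.
apply/hnorm_le0/(ler_eps_scaled K_ge0) => e e0 _.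
have [_ [[u' Du' [v' kv' <-]] xs]] := approx e e0.
have [_ _ hw _] := lip u u' v v' w 0 Du Du' kv kv' kw (kernel0 linTt1).
rewrite subr0 addr0 -xE in hw; rewrite add0r mulrC (le_trans hw) // ler_wpM2l //; exact: ltW.
Qed.

Lemma sum2_kernel_Tt1_closed : closed_in_graph ip T1 (sum2 D (kernel Tt1)).
Proof.
have sub : sum2 D (kernel Tt1) `<=` sum3 D (kernel T1) (kernel Tt1).
  move=> _ [u Du [w kw <-]]; exists u, 0, w; rewrite addr0; split => //.
  exact: (kernel0 linT1).
split=> [x /sub /sum3_sub_dom // | x dx approx].
have [u [v [w [Du kv kw xE]]]] : sum3 D (kernel T1) (kernel Tt1) x.
  by apply: sum3_closed.2 => // e /approx [s [/sub s3 xs]]; exists s.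
suff v0 : v = 0 by exists u => //; exists w; rewrite // xE v0 addr0.
have [K [K_ge0 lip]] := sum3_components_lipschitz.
apply/hnorm_le0/(ler_eps_scaled K_ge0) => e e0 _.
have [_ [[u' Du' [w' kw' <-]] xs]] := approx e e0.
have [_ hv _ _] := lip u u' v 0 w w' Du Du' kv (kernel0 linT1) kw kw'.
rewrite subr0 addr0 -xE in hv; rewrite add0r mulrC (le_trans hv) // ler_wpM2l //; exact: ltW.
Qed.

Lemma sum3_direct_closed :
  [/\ direct3 D (kernel T1) (kernel Tt1),
      is_subspace (sum3 D (kernel T1) (kernel Tt1)),
      closed_in_graph ip T1 (sum3 D (kernel T1) (kernel Tt1)),
      direct2 D (kernel T1) /\ closed_in_graph ip T1 (sum2 D (kernel T1)) &
      direct2 D (kernel Tt1) /\ closed_in_graph ip T1 (sum2 D (kernel Tt1))].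
Proof.
split; [exact: sum3_direct | exact: sum3_subspace | exact: sum3_closed | split | split].
- move=> u v Du kv; have := sum3_direct Du kv (kernel0 linTt1).
  by rewrite addr0 => direct /direct [-> -> _].
- exact: sum2_kernel_T1_closed.
- move=> u w Du kw; have := sum3_direct Du (kernel0 linT1) kw.
  by rewrite addr0 => direct /direct [-> _ ->].
- exact: sum2_kernel_Tt1_closed.
Qed.

End JointFriedrichs.
End InnerProduct.

Theorem lemma3p5 (R : realType) (H : lmodType R[i]) (ip : H -> H -> R[i])
  (hH : is_hilbert ip) (T0 Tt0 T1 Tt1 : operator H)
  (hpair : joint_closed_friedrichs ip T0 Tt0)
  (hT1 : is_adjoint ip Tt0 T1) (hTt1 : is_adjoint ip T0 Tt1) :
  [/\ direct3 (dom T0) (kernel T1) (kernel Tt1),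
      is_subspace (sum3 (dom T0) (kernel T1) (kernel Tt1)),
      closed_in_graph ip T1 (sum3 (dom T0) (kernel T1) (kernel Tt1)),
      direct2 (dom T0) (kernel T1) /\ closed_in_graph ip T1 (sum2 (dom T0) (kernel T1)) &
      direct2 (dom T0) (kernel Tt1) /\ closed_in_graph ip T1 (sum2 (dom T0) (kernel Tt1))].
Proof.
case: hpair => -[[[linT0 denseT0] [linTt0 _]] dom_eq adj [c [c_gt0 bounded]]
  [mu0 [mu0_gt0 coercive]]] [closedT0 _].
exact: (sum3_direct_closed hH dom_eq linT0 linTt0 denseT0 adj (ltW c_gt0) mu0_gt0
  bounded coercive closedT0 hT1 hTt1).
Qed.
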